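(* Let $\mu$ be a stationary ergodic process on $[0,1]^{\mathbb N}$. For every $m\in\mathbb N$, \[\lim_{n,\ell\to\infty}\alpha_n^{\ell}(m)=\alpha(m).\]
   Context: Setting: $\mathscr X=[0,1]$ with its Borel $\sigma$-algebra; a process is a probability measure $\mu$ on $\mathscr X^{\mathbb N}$ (product Borel $\sigma$-algebra), $X_t$ the $t$-th coordinate. For $\sigma$-subalgebras $\mathfrak U,\mathfrak V$, $\alpha(\mathfrak U,\mathfrak V):=\sup_{U\in\mathfrak U,V\in\mathfrak V}|\mu(U\cap V)-\mu(U)\mu(V)|$, and the $\alpha$-mixing coefficients are $\alpha(m):=\sup_{j\in\mathbb N}\alpha\big(\sigma(X_1,\dots,X_j),\sigma(X_t:t\ge j+m)\big)$, $m\in\mathbb N$. Dyadic sets: for $\ell\in\mathbb N$ let $I_{\ell,i}=[i2^{-\ell},(i+1)2^{-\ell})$, $i=0,\dots,2^\ell-1$ (last interval closed, so they partition $[0,1]$); $\Delta_{k,\ell}$ is the set of the $2^{k\ell}$ cubes $I_{\ell,i_1}\times\cdots\times I_{\ell,i_k}\subseteq[0,1]^k$, and $\mathcal D_{k,\ell}$ is the family of all unions of cubes in $\Delta_{k,\ell}$. For $m,\ell\in\mathbb N$, $n>m$, $j\in\{1,\dots,n-m\}$, $j':=n-m-j+1$: \[\alpha_{n,j}^{\ell}(m):=\max_{A\in\mathcal D_{j,\ell},\,B\in\mathcal D_{j',\ell}}\Big|\mu\big((X_1,\dots,X_j)\in A,\ (X_{j+m},\dots,X_n)\in B\big)-\mu\big((X_1,\dots,X_j)\in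 A\big)\mu\big((X_{j+m},\dots,X_n)\in B\big)\Big|,\] and $\alpha_n^{\ell}(m):=\max_{j\in\{1,\dots,n-m\}}\alpha_{n,j}^{\ell}(m)$. The limit is the joint limit as both $n$ and $\ell$ tend to infinity. *)

From HB Require Import structures.
From mathcomp Require Import all_boot all_order all_algebra.
From mathcomp Require Import all_classical all_reals all_analysis.
Unset Printing Implicit Defensive.
Import Order.TTheory GRing.Theory Num.Theory.
Import numFieldNormedType.Exports.
Local Open Scope classical_set_scope.
Local Open Scope ring_scope.

(* Sample paths: x : nat -> R, with the paper's X_t (t = 1,2,...) being the
   coordinate x (t - 1).  The process lives on [0,1]^N; we work on R^N with
   the product Borel sigma-algebra and require the measure to be carried by
   [0,1]^N (hypothesis in the theorem). *)

Definition coord_gen (R : realType) (I : set nat) : set (set (nat -> R)) :=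
  [set A | exists i (B : set R), [/\ I i, measurable B &
                                     A = (fun x : nat -> R => x i) @^-1` B]].

Notation pathspace R := (g_sigma_algebraType (coord_gen R setT)).

Definition sigma_coords (R : realType) (I : set nat) : set (set (nat -> R)) :=
  <<s coord_gen R I >>.

Definition shift (R : realType) (x : nat -> R) : nat -> R := fun t => x t.+1.

Definition stationary (R : realType) (mu : probability (pathspace R) R) :=
  forall A : set (pathspace R), measurable A -> mu (shift R @^-1` A) = mu A.

Definition ergodic (R : realType) (mu : probability (pathspace R) R) :=
  forall A : set (pathspace R), measurable A -> shift R @^-1` A = A ->
    mu A = 0%E \/ mu A = 1%E.

Definition supported_on_unit_cube (R : realType) (mu : probability (pathspace R) R) :=
  mu [set x : pathspace R | forall t, 0 <= x t <= 1] = 1%E.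

(* alpha-mixing coefficient alpha(m): paper's X_1..X_j are coordinates 0..j-1,
   and X_t, t >= j+m, are coordinates >= j+m-1 *)
Definition alpha_mix (R : realType) (mu : probability (pathspace R) R) (m : nat)
  : \bar R :=
  ereal_sup [set r | exists (j : nat) (U V : set (pathspace R)),
     [/\ (1 <= j)%N,
         sigma_coords R [set i | (i < j)%N] U,
         sigma_coords R [set i | (j + m - 1 <= i)%N] V &
         r = `| mu (U `&` V) - mu U * mu V |%E]].

(* dyadic interval I_{l,i}; the last one (i = 2^l - 1) is closed *)
Definition dyad (R : realType) (l i : nat) : set R :=
  if (i.+1 < 2 ^ l)%N then
    [set x | i%:R / 2 ^+ l <= x < i.+1%:R / 2 ^+ l]
  else [set x | i%:R / 2 ^+ l <= x <= i.+1%:R / 2 ^+ l].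

Definition dyadic_event (R : realType) (s k l : nat)
  (S : {set {ffun 'I_k -> 'I_(2 ^ l)}}) : set (pathspace R) :=
  [set x | exists2 c, c \in S & forall i : 'I_k, dyad R l (c i) (x (s + i)%N)].

(* alpha^l_{n,j}(m) : j' = n - m - j + 1 *)
Definition alpha_nlj (R : realType) (mu : probability (pathspace R) R)
  (m n l j : nat) : \bar R :=
  ereal_sup [set r | exists (S : {set {ffun 'I_j -> 'I_(2 ^ l)}})
                            (T : {set {ffun 'I_(n - m - j + 1) -> 'I_(2 ^ l)}}),
     r = `| mu (dyadic_event R 0 j l S `&`
                dyadic_event R (j + m - 1) (n - m - j + 1) l T)
           - mu (dyadic_event R 0 j l S)
             * mu (dyadic_event R (j + m - 1) (n - m - j + 1) l T) |%E].

Definition alpha_nl (R : realType) (mu : probability (pathspace R) R)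
  (m n l : nat) : \bar R :=
  ereal_sup [set alpha_nlj R mu m n l j | j in [set j | (1 <= j <= n - m)%N]].

From HB Require Import structures.
From mathcomp Require Import all_boot all_order all_algebra.
From mathcomp Require Import all_classical all_reals all_analysis.
From mathcomp Require Import zify ring lra.
Import Order.TTheory GRing.Theory Num.Theory.
Import numFieldNormedType.Exports.
Local Open Scope classical_set_scope.
Local Open Scope ring_scope.

(* The events that can be
     d-approximated by dyadic events of a window [s, s + k n) at level l,
     for all large n and l, form a sigma-algebra which contains each
     half-space {x_i <= a} with i eventually inside the window (continuity
     of P from above); so every event of sigma(X_i : i in I) is
     approximable.  Approximating events U, V which nearly attain alpha(m)
     yields alpha^l_n(m) > alpha(m) - e for all large n and l.
   The file treats in turn dyadic intervals, dyadic events and the unit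
   cube, real-valued probabilities and the pseudo-distance, the
   approximation sigma-algebra, the two bounds, and finally the squeeze. *)

Section DyadicIntervals.
Context {R : realType}.

Lemma dyad_cover (l : nat) (x : R) : 0 <= x <= 1 ->
  exists i : 'I_(2 ^ l), dyad R l i x.
Proof.
move=> /andP[x0 x1].
have p0 : (0 < 2 ^ l)%N by rewrite expn_gt0.
have p0r : (0 : R) < 2 ^+ l by rewrite exprn_gt0.
pose t := Num.truncn (x * 2 ^+ l).
have xt0 : 0 <= x * 2 ^+ l by rewrite mulr_ge0 // ltW.
have /andP[t1 t2] := truncn_itv xt0.
have tle : (t <= 2 ^ l)%N.
  rewrite truncn_le_nat; apply: (le_lt_trans (y := 2 ^+ l)).
    by rewrite -[X in _ <= X]mul1r ler_pM2r.
  by rewrite -natrX ltr_nat.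
case: (ltnP t (2 ^ l)) => ht.
  exists (Ordinal ht); rewrite /dyad /=.
  case: ifP => _ /=; rewrite ler_pdivrMr // ?ltr_pdivlMr // ?ler_pdivlMr //.
    by rewrite t1 t2.
  by rewrite t1 ltW.
(* x = 1 falls in the last, closed interval *)
have tE : t = (2 ^ l)%N by apply/eqP; rewrite eqn_leq tle ht.
have lt1 : (2 ^ l - 1 < 2 ^ l)%N by rewrite subn1 prednK // leqnn.
exists (Ordinal lt1); rewrite /dyad /= subn1 prednK // ltnn /=.
rewrite ler_pdivrMr // ler_pdivlMr //.
apply/andP; split; first by apply: le_trans t1; rewrite ler_nat -/t tE leq_pred.
by rewrite natrX ler_piMl // ltW.
Qed.

Lemma dyad_lo {l i : nat} {x : R} : dyad R l i x -> i%:R <= x * 2 ^+ l.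
Proof.
have p0r : (0 : R) < 2 ^+ l by rewrite exprn_gt0.
by rewrite /dyad; case: ifP => _ /= /andP[+ _]; rewrite ler_pdivrMr.
Qed.

Lemma dyad_up {l i : nat} {x : R} : dyad R l i x -> x <= i.+1%:R / 2 ^+ l.
Proof. by rewrite /dyad; case: ifP => _ /= /andP[_ H] //; rewrite ltW. Qed.

Lemma dyad_index_max {l i i' : nat} {x : R} : (i' < 2 ^ l)%N ->
  dyad R l i x -> i'%:R <= x * 2 ^+ l -> (i' <= i)%N.
Proof.
have p0r : (0 : R) < 2 ^+ l by rewrite exprn_gt0.
rewrite /dyad; case: ifP => last_i /= i'l /andP[_ xi] xi'; last lia.
rewrite ltr_pdivlMr // in xi.
by have := le_lt_trans xi' xi; rewrite ltr_nat ltnS.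
Qed.

Lemma dyad_uniq {l : nat} {i i' : 'I_(2 ^ l)} {x : R} :
  dyad R l i x -> dyad R l i' x -> i = i'.
Proof.
move=> xi xi'; apply/val_inj/eqP; rewrite eqn_leq.
by rewrite (dyad_index_max (ltn_ord i) xi' (dyad_lo xi))
           (dyad_index_max (ltn_ord i') xi (dyad_lo xi')).
Qed.

Lemma dyad_measurable l (i : nat) : measurable (dyad R l i).
Proof.
rewrite /dyad; case: ifP => _.
  have -> : [set x : R | i%:R / 2 ^+ l <= x < i.+1%:R / 2 ^+ l] =
    `[i%:R / 2 ^+ l, i.+1%:R / 2 ^+ l[%classic.
    by apply/seteqP; split => x /=; rewrite in_itv.
  exact: measurable_itv.
have -> : [set x : R | i%:R / 2 ^+ l <= x <= i.+1%:R / 2 ^+ l] =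
  `[i%:R / 2 ^+ l, i.+1%:R / 2 ^+ l]%classic.
  by apply/seteqP; split => x /=; rewrite in_itv.
exact: measurable_itv.
Qed.

End DyadicIntervals.

Section SymmetricDifference.
Variable T : Type.
Implicit Types A B C U V : set T.

Lemma setY_triangle A B C : A `+` C `<=` (A `+` B) `|` (B `+` C).
Proof.
by move=> x; rewrite /setY /setU /setD /=; case: (pselect (B x)); tauto.
Qed.

Lemma setYI_sub U V A B : (U `&` V) `+` (A `&` B) `<=` (U `+` A) `|` (V `+` B).
Proof.
move=> x; rewrite /setY /setU /setD /setI /=.
by case: (pselect (U x)); case: (pselect (V x)); case: (pselect (A x)); tauto.
Qed.

Lemma setYU_sub U V A B : (U `|` V) `+` (A `|` B) `<=` (U `+` A) `|` (V `+` B).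
Proof.
move=> x; rewrite /setY /setU /setD /=.
by case: (pselect (U x)); case: (pselect (V x)); case: (pselect (A x)); tauto.
Qed.

End SymmetricDifference.

(* Dyadic events are finite unions of cylinders over dyadic cubes, hence lie
   in the sigma-algebra of the coordinates they involve; on the unit cube
   every window of coordinates has exactly one dyadic code, so that the
   dyadic events of a fixed window and level form a Boolean algebra there. *)
Section DyadicEvents.
Variable R : realType.
Local Notation PS := (pathspace R).

Definition unit_cube : set PS := [set x | forall t, 0 <= x t <= 1].

Lemma coord_preimage_sigma (I : set nat) i (B : set R) : I i -> measurable B ->
  sigma_coords R I ((fun x : nat -> R => x i) @^-1` B).
Proof. by move=> Ii mB; apply: sub_sigma_algebra; exists i, B. Qed.

Lemma sigma_coords_measurable {I : set nat} {U : set PS} :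
  sigma_coords R I U -> measurable U.
Proof. by apply: sub_sigma_algebra2 => A [i [B [_ mB ->]]]; exists i, B. Qed.

Lemma coord_preimage_measurable i (B : set R) : measurable B ->
  measurable ((fun x : PS => x i) @^-1` B).
Proof.
by move=> mB; apply: (@sigma_coords_measurable setT); exact: coord_preimage_sigma.
Qed.

Lemma dyadic_event_sigma (I : set nat) s k l (S : {set {ffun 'I_k -> 'I_(2 ^ l)}}) :
  (forall t : 'I_k, I (s + t)%N) -> sigma_coords R I (dyadic_event R s k l S).
Proof.
move=> HI.
have -> : dyadic_event R s k l S = \bigcup_(c in [set c | c \in S])
    \bigcap_(t in [set: 'I_k]) ((fun x : nat -> R => x (s + t)%N) @^-1` dyad R l (c t)).
  by apply/seteqP; split => x /= [c cS H]; exists c => // t; [move=> _|]; apply: H.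
change (@measurable _ (g_sigma_algebraType (coord_gen R I))
  (\bigcup_(c in [set c | c \in S]) \bigcap_(t in [set: 'I_k])
     ((fun x : nat -> R => x (s + t)%N) @^-1` dyad R l (c t)))).
apply: fin_bigcup_measurable; first exact: finite_finset.
move=> c _; apply: fin_bigcap_measurable; first exact: finite_finset.
by move=> t _; apply: coord_preimage_sigma => //; exact: dyad_measurable.
Qed.

Lemma dyadic_event_measurable s k l (S : {set {ffun 'I_k -> 'I_(2 ^ l)}}) :
  measurable (dyadic_event R s k l S : set PS).
Proof. exact: (@dyadic_event_sigma setT). Qed.

Lemma dyadic_event0 s k l : dyadic_event R s k l finset.set0 = set0.
Proof. by apply/seteqP; split => x //= [c]; rewrite inE. Qed.

Lemma dyadic_eventU s k l S T :
  dyadic_event R s k l (S :|: T) = dyadic_event R s k l S `|` dyadic_event R s k l T.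
Proof.
apply/seteqP; split => x /=.
  by move=> [c]; rewrite inE => /orP[cS|cT] H; [left|right]; exists c.
by move=> [[c cS H]|[c cT H]]; exists c => //; rewrite inE ?cS ?cT ?orbT.
Qed.

Lemma unit_cube_measurable : measurable unit_cube.
Proof.
have -> : unit_cube =
    \bigcap_(t in [set: nat]) ((fun x : nat -> R => x t) @^-1` `[0, 1]%classic).
  apply/seteqP; split => x /= H t; [move=> _|];
    by have := H t; rewrite /= ?in_itv //=; apply.
apply: bigcap_measurable; first by exists 0%N.
by move=> t _; apply: coord_preimage_measurable; exact: measurable_itv.
Qed.

Lemma dyadic_code_exists s k l {x : PS} : unit_cube x ->
  exists c : {ffun 'I_k -> 'I_(2 ^ l)}, forall t : 'I_k, dyad R l (c t) (x (s + t)%N).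
Proof.
move=> Cx; exists [ffun t : 'I_k => sval (cid (dyad_cover l _ (Cx (s + t)%N)))].
by move=> t; rewrite ffunE; case: cid.
Qed.

Lemma dyadic_code_uniq {s k l : nat} {x : PS} {c c' : {ffun 'I_k -> 'I_(2 ^ l)}} :
  (forall t : 'I_k, dyad R l (c t) (x (s + t)%N)) ->
  (forall t : 'I_k, dyad R l (c' t) (x (s + t)%N)) -> c = c'.
Proof. by move=> H H'; apply/ffunP => t; apply: dyad_uniq (H t) (H' t). Qed.

Lemma dyadic_eventC s k l S {x : PS} : unit_cube x ->
  dyadic_event R s k l (~: S) x <-> ~ dyadic_event R s k l S x.
Proof.
move=> Cx; split.
  move=> [c cS Hc] [c' c'S Hc'].
  by move: cS; rewrite (dyadic_code_uniq Hc Hc') inE c'S.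
move=> nSx; have [c Hc] := dyadic_code_exists s k l Cx; exists c => //.
by rewrite inE; apply/negP => cS; apply: nSx; exists c.
Qed.

Definition dyadic_below s k l i (a : R) : {set {ffun 'I_k -> 'I_(2 ^ l)}} :=
  [set c : {ffun 'I_k -> 'I_(2 ^ l)} |
    [forall t : 'I_k, ((s + t)%N == i) ==> ((c t)%:R / 2 ^+ l <= a)]].

Lemma halfspace_dyadic_setY {s k} l {i} (a : R) : (s <= i < s + k)%N ->
  ((fun x : PS => x i) @^-1` [set y | y <= a])
    `+` dyadic_event R s k l (dyadic_below s k l i a)
  `<=` ~` unit_cube `|` (fun x : PS => x i) @^-1` `]a, a + l.+1%:R^-1]%classic.
Proof.
move=> /andP[si ik]; have p0 : (0 : R) < 2 ^+ l by rewrite exprn_gt0.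
have ti : (i - s < k)%N by lia.
pose t0 : 'I_k := Ordinal ti; have st0 : (s + t0)%N = i by rewrite /= subnKC.
move=> x hx; case: (pselect (unit_cube x)) => Cx; last by left.
right; case: hx => [[xa nA]|[[c cS Hc] nxa]].
  exfalso; apply: nA; have [c Hc] := dyadic_code_exists s k l Cx; exists c => //.
  rewrite inE; apply/forallP => t; apply/implyP => /eqP st.
  by apply: le_trans xa; rewrite -st ler_pdivrMr //; exact: dyad_lo (Hc t).
move: cS; rewrite inE => /forallP /(_ t0) /implyP /(_ (introT eqP st0)) ca.
have := dyad_up (Hc t0); rewrite st0 => xi.
rewrite /= in_itv /= ltNge; apply/andP; split; first exact/negP.
apply: le_trans xi _.
rewrite -addn1 natrD mulrDl lerD // mul1r lef_pV2 ?posrE // -natrX ler_nat.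
exact: ltn_expl.
Qed.

End DyadicEvents.
Arguments unit_cube {R}.

Lemma dist_mul_le (F : realFieldType) (u v a b : F) : 0 <= u <= 1 -> 0 <= b <= 1 ->
  `|u * v - a * b| <= `|u - a| + `|v - b|.
Proof.
move=> /andP[u0 u1] /andP[b0 b1].
rewrite (_ : u * v - a * b = u * (v - b) + b * (u - a)); last by ring.
apply: le_trans (ler_normD _ _) _; rewrite !normrM addrC.
by apply: lerD; apply: ler_piMl => //; rewrite ger0_norm.
Qed.

Section RealProbability.
Context {d : measure_display} {T : measurableType d} {R : realType}.
Variable mu : probability T R.
Implicit Types A B U V X Y : set T.

Definition pr A : R := fine (mu A).

Lemma prE {A} : measurable A -> mu A = (pr A)%:E.
Proof.
move=> mA; rewrite /pr fineK // ge0_fin_numE ?measure_ge0 //.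
by apply: (le_lt_trans (probability_le1 _ mA)); rewrite ltry.
Qed.

Lemma pr_ge0 A : 0 <= pr A.
Proof. by rewrite /pr fine_ge0 // measure_ge0. Qed.

Lemma pr_le1 {A} : measurable A -> pr A <= 1.
Proof. by move=> mA; rewrite -lee_fin -prE //; apply: probability_le1. Qed.

Lemma pr0 : pr set0 = 0.
Proof. by rewrite /pr measure0. Qed.

Lemma pr_le {A B} : measurable A -> measurable B -> A `<=` B -> pr A <= pr B.
Proof.
by move=> mA mB AB; rewrite -lee_fin -!prE //; apply: le_measure => //; rewrite inE.
Qed.

Lemma pr_setU_le {A B} : measurable A -> measurable B -> pr (A `|` B) <= pr A + pr B.
Proof.
move=> mA mB; rewrite -lee_fin EFinD -!prE //; last exact: measurableU.
exact: measureU2.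
Qed.

Lemma pr_sub_setU_le {X A B} : measurable X -> measurable A -> measurable B ->
  X `<=` A `|` B -> pr X <= pr A + pr B.
Proof.
move=> mX mA mB XAB; apply: le_trans (pr_setU_le mA mB).
by apply: pr_le => //; exact: measurableU.
Qed.

Lemma pr_setC_null {A} : measurable A -> mu A = 1%E -> pr (~` A) = 0.
Proof. by move=> mA A1; rewrite /pr probability_setC // A1 subee. Qed.

Lemma measurableY {A B} : measurable A -> measurable B -> measurable (A `+` B).
Proof. by move=> mA mB; apply: measurableU; apply: measurableD. Qed.

Lemma pr_setY_triangle {A B C} : measurable A -> measurable B -> measurable C ->
  pr (A `+` C) <= pr (A `+` B) + pr (B `+` C).
Proof.
move=> mA mB mC; apply: pr_sub_setU_le; try exact: measurableY.
exact: setY_triangle.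
Qed.

Lemma dist_pr_le_setY {X Y} : measurable X -> measurable Y ->
  `|pr X - pr Y| <= pr (X `+` Y).
Proof.
have le_sum X' Y' : measurable X' -> measurable Y' -> pr X' <= pr Y' + pr (X' `+` Y').
  move=> mX' mY'; apply: pr_sub_setU_le => //; first exact: measurableY.
  by move=> x Xx; case: (pselect (Y' x)) => Yx; [left|right; left].
move=> mX mY; have := le_sum _ _ mX mY; have := le_sum _ _ mY mX.
rewrite setYC => h1 h2; rewrite ler_norml; apply/andP; split; lra.
Qed.

Lemma cov_setY_le {U V A B} : measurable U -> measurable V -> measurable A ->
  measurable B ->
  `|pr (U `&` V) - pr U * pr V| <=
    `|pr (A `&` B) - pr A * pr B| + 2 * pr (U `+` A) + 2 * pr (V `+` B).
Proof.
move=> mU mV mA mB.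
have mUV := measurableI _ _ mU mV; have mAB := measurableI _ _ mA mB.
have dI := dist_pr_le_setY mUV mAB.
have IY : pr ((U `&` V) `+` (A `&` B)) <= pr (U `+` A) + pr (V `+` B).
  by apply: pr_sub_setU_le; try exact: measurableY; exact: setYI_sub.
have dU := dist_pr_le_setY mU mA; have dV := dist_pr_le_setY mV mB.
have dM := @dist_mul_le _ (pr U) (pr V) (pr A) (pr B).
rewrite !pr_ge0 !pr_le1 // in dM; have {}dM := dM isT isT.
have t1 := ler_distD (pr (A `&` B)) (pr (U `&` V)) (pr U * pr V).
have t2 := ler_distD (pr A * pr B) (pr (A `&` B)) (pr U * pr V).
rewrite (distrC (pr A * pr B)) in t2.
lra.
Qed.

Lemma cov_le1 {U V} : measurable U -> measurable V ->
  `|pr (U `&` V) - pr U * pr V| <= 1.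
Proof.
move=> mU mV; have mUV := measurableI _ _ mU mV.
have h1 := pr_ge0 (U `&` V); have h2 := pr_le1 mUV.
have h3 : 0 <= pr U * pr V by rewrite mulr_ge0 // pr_ge0.
have h4 : pr U * pr V <= 1 by rewrite mulr_ile1 ?pr_ge0 ?pr_le1.
rewrite ler_norml; apply/andP; split; lra.
Qed.

Lemma cov_prE {X Y} : measurable X -> measurable Y ->
  (`|mu (X `&` Y) - mu X * mu Y|)%E = (`|pr (X `&` Y) - pr X * pr Y|)%:E.
Proof. by move=> mX mY; rewrite !prE //; exact: measurableI. Qed.

(* continuity from below: a countable union is approximated by the union
   of finitely many of its members *)
Lemma pr_bigcup_approx {F : (set T)^nat} {e : R} :
  (forall k, measurable (F k)) -> 0 < e ->
  exists K, pr ((\bigcup_k F k) `+` \big[setU/set0]_(i < K.+1) F i) < e.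
Proof.
move=> mF e0; pose G K := \big[setU/set0]_(i < K.+1) F i.
have mG K : measurable (G K) by apply: bigsetU_measurable => i _.
have GE : \bigcup_k G k = \bigcup_k F k by exact: bigcup_bigsetU_bigcup.
have mU : measurable (\bigcup_k F k) by exact: bigcupT_measurable.
have ndG : nondecreasing_seq G.
  apply/nondecreasing_seqP => n; rewrite /G [X in (_ <= X)%O]big_ord_recr /=.
  by apply/subsetPset; exact: subsetUl.
have cvE : (mu \o G) x @[x --> \oo] --> (pr (\bigcup_k F k))%:E.
  by rewrite -prE // -GE; apply: nondecreasing_cvg_mu => //; rewrite GE.
have cv : (pr \o G) x @[x --> \oo] --> pr (\bigcup_k F k) := fine_cvg cvE.
have lt1 : pr (\bigcup_k F k) - e < pr (\bigcup_k F k) by rewrite ltrBlDr ltrDl.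
have [K _ HK] := cvgr_gt _ (cv _) _ lt1.
have {}HK := HK K (leqnn K); exists K; rewrite -/(G K).
have GF : G K `<=` \bigcup_k F k by rewrite -GE; exact: bigcup_sup.
have -> : (\bigcup_k F k) `+` G K = \bigcup_k F k `\` G K.
  by rewrite /setY (_ : G K `\` _ = set0) ?setU0 //; apply/seteqP; split => x //= [/GF].
have mD : measurable (\bigcup_k F k `\` G K) by exact: measurableD.
have splitU : pr (\bigcup_k F k) = pr (G K) + pr (\bigcup_k F k `\` G K).
  apply/EFin_inj; rewrite EFinD -!prE // -measureU //; first by rewrite setDUK.
  by apply/seteqP; split => x //= [? []].
move: HK; rewrite /= splitU; lra.
Qed.

(* continuity from above: the slabs a < f <= a + 1/(l+1) become negligible *)
Lemma pr_slab_small {f : T -> R} (a : R) {e : R} :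
  (forall B : set R, measurable B -> measurable (f @^-1` B)) -> 0 < e ->
  exists L, forall l, (L <= l)%N -> pr (f @^-1` `]a, a + l.+1%:R^-1]%classic) < e.
Proof.
move=> mf e0; pose D (l : nat) := f @^-1` `]a, a + l.+1%:R^-1]%classic.
have mD l : measurable (D l) by apply: mf; exact: measurable_itv.
have D0 : \bigcap_l D l = set0.
  apply/seteqP; split => x //= Hx.
  have := Hx 0%N I; rewrite /D /= in_itv /= => /andP[ax _].
  have [k hk] := ltr_add_invr ax.
  have := Hx k I; rewrite /D /= in_itv /= => /andP[_ hx].
  by move: (le_lt_trans hx hk); rewrite ltxx.
have niD : nonincreasing_seq D.
  apply/nonincreasing_seqP => l; apply/subsetPset => x.
  rewrite /D /= !in_itv /= => /andP[-> h] /=.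
  by apply: le_trans h _; rewrite lerD2l lef_pV2 ?posrE // ler_nat.
have cvE : (mu \o D) x @[x --> \oo] --> (pr set0)%:E.
  have mD0 : (mu (D 0%N) < +oo)%E by rewrite (prE (mD 0%N)) ltry.
  have mDI : measurable (\bigcap_l D l) by rewrite D0.
  by rewrite -prE // -D0; exact: nonincreasing_cvg_mu mD0 mD mDI niD.
have cv : (pr \o D) x @[x --> \oo] --> pr set0 := fine_cvg cvE.
have e_gt : pr set0 < e by rewrite pr0.
have [L _ HL] := cvgr_lt _ (cv _) _ e_gt.
by exists L => l Ll; exact: HL.
Qed.

End RealProbability.

(* The sets that can be approximated, in P-measure of the symmetric
   difference, by dyadic events on the window [s, s + k n) at level l, for
   all large n and l.  They form a sigma-algebra (complements use that P is
   carried by the unit cube, countable unions use continuity from below)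
   which contains the half-spaces {x_i <= a} of every coordinate eventually
   covered by the window; hence it contains sigma(x_i : i in I). *)
Section DyadicApproximation.
Variables (R : realType) (mu : probability (pathspace R) R).
Hypothesis supp : supported_on_unit_cube R mu.
Variables (s : nat) (k : nat -> nat).
Local Notation PS := (pathspace R).

Definition dyadic_approximable (U : set PS) := measurable U /\
  forall e : R, 0 < e -> exists N : nat, forall l n : nat, (N <= l)%N -> (N <= n)%N ->
    exists S : {set {ffun 'I_(k n) -> 'I_(2 ^ l)}},
      pr mu (U `+` dyadic_event R s (k n) l S) < e.

Definition eventually_covered (i : nat) :=
  (s <= i)%N /\ exists N0, forall n, (N0 <= n)%N -> (i < s + k n)%N.

Lemma unit_cube_compl_null : pr mu (~` unit_cube) = 0.
Proof. by apply: pr_setC_null (unit_cube_measurable R) _; exact: supp. Qed.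

Lemma approximable_limit U : measurable U ->
  (forall e, 0 < e -> exists W, dyadic_approximable W /\ pr mu (U `+` W) < e) ->
  dyadic_approximable U.
Proof.
move=> mU H; split => // e e0.
have e20 : 0 < e / 2 by rewrite divr_gt0.
have [W [[mW HW] UW]] := H _ e20; have [N HN] := HW _ e20.
exists N => l n Nl Nn; have [S HS] := HN l n Nl Nn; exists S.
have mA := dyadic_event_measurable R s (k n) l S.
apply: le_lt_trans (pr_setY_triangle mu mU mW mA) _.
by rewrite [e](splitr e); exact: ltrD.
Qed.

Lemma approximable0 : dyadic_approximable set0.
Proof.
split => // e e0; exists 0%N => l n _ _; exists finset.set0.
by rewrite dyadic_event0 setY0 pr0.
Qed.

Lemma approximableU {U V} : dyadic_approximable U -> dyadic_approximable V ->
  dyadic_approximable (U `|` V).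
Proof.
move=> [mU HU] [mV HV]; split; first exact: measurableU.
move=> e e0; have e20 : 0 < e / 2 by rewrite divr_gt0.
have [N1 H1] := HU _ e20; have [N2 H2] := HV _ e20.
exists (maxn N1 N2) => l n Nl Nn.
have [S HS] := H1 l n (leq_trans (leq_maxl _ _) Nl) (leq_trans (leq_maxl _ _) Nn).
have [S' HS'] := H2 l n (leq_trans (leq_maxr _ _) Nl) (leq_trans (leq_maxr _ _) Nn).
have mA := dyadic_event_measurable R s (k n) l S.
have mA' := dyadic_event_measurable R s (k n) l S'.
exists (S :|: S'); rewrite dyadic_eventU.
apply: le_lt_trans (pr_sub_setU_le mu _ (measurableY mU mA) (measurableY mV mA') _) _.
- by apply: measurableY; exact: measurableU.
- exact: setYU_sub.
by rewrite [e](splitr e); exact: ltrD.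
Qed.

Lemma approximableC {U} : dyadic_approximable U -> dyadic_approximable (~` U).
Proof.
move=> [mU HU]; split; first exact: measurableC.
move=> e e0; have [N HN] := HU e e0; exists N => l n Nl Nn.
have [S HS] := HN l n Nl Nn; exists (~: S).
have mA := dyadic_event_measurable R s (k n) l S.
have mA' := dyadic_event_measurable R s (k n) l (~: S).
have mC := measurableC (unit_cube_measurable R).
have sub : (~` U) `+` dyadic_event R s (k n) l (~: S) `<=`
    (U `+` dyadic_event R s (k n) l S) `|` ~` unit_cube.
  move=> x; case: (pselect (unit_cube x)) => Cx; last by right.
  have /= := dyadic_eventC R s (k n) l S Cx.
  rewrite /setY /setU /setD /setC /=.
  by case: (pselect (U x)); case: (pselect (dyadic_event R s (k n) l S x)); tauto.
have mCY : measurable ((~` U) `+` dyadic_event R s (k n) l (~: S)).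
  by apply: measurableY => //; exact: measurableC.
apply: le_lt_trans (pr_sub_setU_le mu mCY (measurableY mU mA) mC sub) _.
by rewrite unit_cube_compl_null addr0.
Qed.

Lemma approximable_bigcup (F : (set PS)^nat) :
  (forall i, dyadic_approximable (F i)) -> dyadic_approximable (\bigcup_i F i).
Proof.
move=> aF; have mF i : measurable (F i) by case: (aF i).
have aG K : dyadic_approximable (\big[setU/set0]_(i < K.+1) F i).
  elim: K => [|K IH]; first by rewrite big_ord_recr big_ord0 /= set0U.
  by rewrite big_ord_recr /=; exact: approximableU.
apply: approximable_limit; first exact: bigcupT_measurable.
move=> e e0; have [K HK] := pr_bigcup_approx mu mF e0.
by exists (\big[setU/set0]_(i < K.+1) F i).
Qed.

Lemma approximable_sigma_algebra : sigma_algebra setT dyadic_approximable.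
Proof.
split; [exact: approximable0| |exact: approximable_bigcup].
by move=> A aA; rewrite setTD; exact: approximableC.
Qed.

Lemma approximableI {U V} : dyadic_approximable U -> dyadic_approximable V ->
  dyadic_approximable (U `&` V).
Proof.
move=> aU aV.
have := approximableC (approximableU (approximableC aU) (approximableC aV)).
by rewrite setCU !setCK.
Qed.

Lemma approximable_halfspace i (a : R) : eventually_covered i ->
  dyadic_approximable ((fun x : PS => x i) @^-1` [set y | y <= a]).
Proof.
move=> [si [N0 HN0]].
have mH : measurable ((fun x : PS => x i) @^-1` [set y | y <= a]).
  apply: coord_preimage_measurable.
  rewrite (_ : [set y | y <= a] = `]-oo, a]%classic); first exact: measurable_itv.
  by apply/seteqP; split => y /=; rewrite in_itv.
split => // e e0.
have [L HL] := pr_slab_small mu a (coord_preimage_measurable R i) e0.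
exists (maxn L N0) => l n Nl Nn; exists (dyadic_below R s (k n) l i a).
have iw : (s <= i < s + k n)%N by rewrite si HN0 // (leq_trans (leq_maxr _ _) Nn).
have mC := measurableC (unit_cube_measurable R).
have mY := measurableY mH
  (dyadic_event_measurable R s (k n) l (dyadic_below R s (k n) l i a)).
have mS : measurable ((fun x : PS => x i) @^-1` `]a, a + l.+1%:R^-1]%classic).
  by apply: coord_preimage_measurable; exact: measurable_itv.
apply: le_lt_trans (pr_sub_setU_le mu mY mC mS (halfspace_dyadic_setY R l a iw)) _.
by rewrite unit_cube_compl_null add0r; apply: HL; exact: leq_trans (leq_maxl _ _) Nl.
Qed.

(* the Borel sets B with {x_i in B} approximable form a sigma-algebra
   containing the intervals ]a, b], hence all Borel sets *)
Lemma approximable_coord i (B : set R) : eventually_covered i -> measurable B ->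
  dyadic_approximable ((fun x : PS => x i) @^-1` B).
Proof.
move=> ci mB.
pose GR := [set B : set R | dyadic_approximable ((fun x : PS => x i) @^-1` B)].
have sGR : sigma_algebra setT GR.
  split.
  - by rewrite /GR /= preimage_set0; exact: approximable0.
  - by move=> A gA; rewrite /GR /= setTD preimage_setC; exact: approximableC.
  - by move=> F gF; rewrite /GR /= preimage_bigcup; exact: approximable_bigcup.
have ocGR a b : GR `]a, b]%classic.
  rewrite /GR /= (_ : _ @^-1` _ = ((fun x : PS => x i) @^-1` [set y | y <= b]) `&`
     ~` ((fun x : PS => x i) @^-1` [set y | y <= a])).
    apply: approximableI; first exact: approximable_halfspace.
    by apply: approximableC; exact: approximable_halfspace.
  apply/seteqP; split => x /=; rewrite in_itv /=.
    by move=> /andP[h1 h2]; split => //; apply/negP; rewrite -ltNge.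
  by move=> [h2 h1]; rewrite h2 andbT ltNge; apply/negP.
by apply: (smallest_sub sGR _ mB) => _ [[a b] _ <-]; exact: ocGR.
Qed.

Lemma sigma_coords_approximable (I : set nat) (U : set PS) :
  (forall i, I i -> eventually_covered i) -> sigma_coords R I U ->
  dyadic_approximable U.
Proof.
move=> cI; apply: smallest_sub; first exact: approximable_sigma_algebra.
by move=> _ [i [B [Ii mB ->]]]; apply: approximable_coord => //; exact: cI.
Qed.

End DyadicApproximation.
Arguments dyadic_approximable {R} mu s k U.
Arguments sigma_coords_approximable {R mu} supp {s k I U}.

Lemma cvg_squeeze_below {R : realType} {U : Type} (F : set_system U) {FF : Filter F}
    (f : U -> \bar R) (a : R) :
  (forall p, (f p <= a%:E)%E) ->
  (forall e, 0 < e -> \forall p \near F, ((a - e)%:E < f p)%E) ->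
  f @ F --> a%:E.
Proof.
move=> up low.
have fin p e : ((a - e)%:E < f p)%E -> f p \is a fin_num.
  move=> lowp; rewrite fin_numE; apply/andP; split; apply/eqP => fpE.
    by rewrite fpE in lowp.
  by have := up p; rewrite fpE.
apply/fine_cvgP; split; first by apply: filterS (low 1 ltr01) => p /fin.
apply/cvgrPdist_lt => e e0; apply: filterS (low e e0) => p lowp.
have fp := fin p e lowp; have upp := up p.
rewrite -(fineK fp) lte_fin in lowp; rewrite -(fineK fp) lee_fin in upp.
by rewrite /= ger0_norm ?subr_ge0 //; lra.
Qed.

Section MixingCoefficients.
Variables (R : realType) (mu : probability (pathspace R) R) (m : nat).
Local Notation PS := (pathspace R).

Lemma alpha_mix_le1 : (alpha_mix R mu m <= 1%:E)%E.
Proof.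
apply/ereal_supP => _ [j [U [V [_ sU sV ->]]]].
have mU := sigma_coords_measurable R sU; have mV := sigma_coords_measurable R sV.
by rewrite cov_prE // lee_fin; exact: cov_le1.
Qed.

Lemma alpha_mix_fin_num : alpha_mix R mu m \is a fin_num.
Proof.
have sT I : sigma_coords R I setT.
  exact: (@measurableT _ (g_sigma_algebraType (coord_gen R I))).
have ge0 : (0%:E <= alpha_mix R mu m)%E.
  apply: le_ereal_sup_tmp; exists (`| mu (setT `&` setT) - mu setT * mu setT |)%E.
    by exists 1%N, setT, setT; split => //; exact: sT.
  exact: abse_ge0.
by rewrite ge0_fin_numE // (le_lt_trans alpha_mix_le1) // ltry.
Qed.

Lemma alpha_nl_le_mix n l : (alpha_nl R mu m n l <= alpha_mix R mu m)%E.
Proof.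
apply/ereal_supP => _ [j /andP[j1 _] <-].
apply/ereal_supP => _ [S [T ->]]; apply: ereal_sup_ubound.
exists j, (dyadic_event R 0 j l S), (dyadic_event R (j + m - 1) (n - m - j + 1) l T).
split => //; apply: dyadic_event_sigma => t /=; first by rewrite add0n ltn_ord.
by rewrite leq_addr.
Qed.

Lemma cov_dyadic_le_alpha_nl n l j S T : (1 <= j <= n - m)%N ->
  (`| mu (dyadic_event R 0 j l S `&` dyadic_event R (j + m - 1) (n - m - j + 1) l T)
      - mu (dyadic_event R 0 j l S)
        * mu (dyadic_event R (j + m - 1) (n - m - j + 1) l T) |
   <= alpha_nl R mu m n l)%E.
Proof.
move=> hj; apply: le_ereal_sup_tmp; exists (alpha_nlj R mu m n l j); first by exists j.
by apply: le_ereal_sup_tmp; eexists; first by exists S, T.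
Qed.

Hypothesis supp : supported_on_unit_cube R mu.

Lemma alpha_nl_eventually_gt (a e : R) : alpha_mix R mu m = a%:E -> 0 < e ->
  exists N : nat, forall n l, (N <= n)%N -> (N <= l)%N ->
    ((a - e)%:E < alpha_nl R mu m n l)%E.
Proof.
move=> ha e0.
have : ((a - e / 2)%:E < alpha_mix R mu m)%E.
  by rewrite ha lte_fin ltrBlDr ltrDl divr_gt0.
move/ereal_sup_gt => [_ [j [U [V [j1 sU sV ->]]]] near_sup].
have mU := sigma_coords_measurable R sU; have mV := sigma_coords_measurable R sV.
rewrite cov_prE // lte_fin in near_sup.
have d0 : 0 < e / 8 by rewrite divr_gt0.
(* U is read on the window [0, j), V on the window [j + m - 1, n) *)
have [_ /(_ _ d0) [N1 H1]] : dyadic_approximable mu 0 (fun => j) U.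
  apply: (sigma_coords_approximable supp _ sU) => i /= ij.
  by split => //; exists 0%N => n _; rewrite add0n.
have [_ /(_ _ d0) [N2 H2]] :
    dyadic_approximable mu (j + m - 1) (fun n => n - m - j + 1)%N V.
  apply: (sigma_coords_approximable supp _ sV) => i /= ji.
  by split => //; exists (i.+1 + j + m)%N => n hn; lia.
exists (maxn (maxn N1 N2) (j + m)) => n l hn hl.
have [S HS] := H1 l n ltac:(lia) ltac:(lia).
have [T HT] := H2 l n ltac:(lia) ltac:(lia).
apply: lt_le_trans (cov_dyadic_le_alpha_nl n l j S T ltac:(lia)).
have mA := dyadic_event_measurable R 0 j l S.
have mB := dyadic_event_measurable R (j + m - 1) (n - m - j + 1) l T.
rewrite cov_prE // lte_fin.
have := cov_setY_le mu mU mV mA mB.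
lra.
Qed.

End MixingCoefficients.
Arguments alpha_nl_eventually_gt {R mu m} supp {a e}.

Theorem proposition1 (R : realType) (mu : probability (pathspace R) R) (m : nat) :
  supported_on_unit_cube R mu -> stationary R mu -> ergodic R mu -> (0 < m)%N ->
  (fun p : nat * nat => alpha_nl R mu m p.1 p.2) @ filter_prod \oo \oo
    --> alpha_mix R mu m.
Proof.
move=> supp _ _ _.
have ha := esym (fineK (alpha_mix_fin_num R mu m)); rewrite ha.
apply: cvg_squeeze_below => [p|e e0]; first by rewrite -ha alpha_nl_le_mix.
have [N HN] := alpha_nl_eventually_gt supp ha e0.
exists ([set n | (N <= n)%N], [set l | (N <= l)%N]); first by split; exists N.
by move=> [n l] [/= hn hl]; exact: HN.
Qed.
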